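(* Fix $\epsilon_2>0$ and $(u_\pm,v_\pm)$ with $v_\pm>0$ and $u_+<u_--2\epsilon_2$. For small $\epsilon_1>0$ let $(u^{\epsilon_1\epsilon_2},v^{\epsilon_1\epsilon_2})$ be the two-shock Riemann solution of the perturbed Brio system with data $(u_\pm,v_\pm)$. Then as $\epsilon_1\to0$, in the sense of distributions on $t>0$, $$u^{\epsilon_1\epsilon_2}\to u_-+(u_+-u_-)H(x-\sigma t),\qquad v^{\epsilon_1\epsilon_2}\to v_-+(v_+-v_-)H(x-\sigma t)+w^{\epsilon_2}(t)\delta_S,$$ with $\sigma=\tfrac12(u_-+u_+)$, $S=\{(t,\sigma t)\}$, $w^{\epsilon_2}(t)=\tfrac12\big(v_+(u_--u_++2\epsilon_2)-v_-(u_+-u_-+2\epsilon_2)\big)t$; this limit is the delta-shock solution of $u_t+(\tfrac12u^2)_x=0$, $v_t+(uv-\epsilon_2v)_x=0$ with these Riemann data, whose value of $u$ on the discontinuity is $u_\delta=\sigma+\epsilon_2$ (the limit of the intermediate velocity).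
   Context: Perturbed Brio system: $u_t+(\tfrac12u^2+\tfrac12\epsilon_1v^2)_x=0$, $v_t+(uv-\epsilon_2v)_x=0$, $\epsilon_1,\epsilon_2>0$, $v>0$, with Riemann data $(u_-,v_-)$ for $x<0$, $(u_+,v_+)$ for $x>0$. The two-shock solution is $(u_-,v_-)$ for $x/t<\sigma_1$, $(u_*,v_* )$ for $\sigma_1<x/t<\sigma_2$, $(u_+,v_+)$ for $x/t>\sigma_2$, where $v_*>\max(v_-,v_+)$, $u_+<u_*<u_-$, $$u_*=u_-+(v_*-v_-)\frac{\epsilon_2-\sqrt{\epsilon_2^2+4\epsilon_1(v_*+v_-)^2}}{v_*+v_-},\qquad u_+=u_*+(v_+-v_* )\frac{\epsilon_2+\sqrt{\epsilon_2^2+4\epsilon_1(v_*+v_+)^2}}{v_*+v_+},$$ $\sigma_1=u_-+\frac{v_*(u_*-u_-)}{v_*-v_-}-\epsilon_2$, $\sigma_2=u_++\frac{v_*(u_+-u_* )}{v_+-v_*}-\epsilon_2$. $H$ is the Heaviside function and $\langle w\delta_S,\phi\rangle=\int_0^\infty w(t)\phi(t,\sigma t)dt$. *)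

From Stdlib Require Import Reals.
Open Scope R_scope.

Definition cont2 (f : R -> R -> R) : Prop :=
  forall t x eps, 0 < eps -> exists del, 0 < del /\
    forall t' x', Rabs (t' - t) < del -> Rabs (x' - x) < del ->
      Rabs (f t' x' - f t x) < eps.

Fixpoint Ck (n : nat) (f : R -> R -> R) : Prop :=
  match n with
  | O => cont2 f
  | S m => cont2 f /\ exists ft fx : R -> R -> R,
      (forall t x, derivable_pt_lim (fun s => f s x) t (ft t x)) /\
      (forall t x, derivable_pt_lim (fun y => f t y) x (fx t x)) /\
      Ck m ft /\ Ck m fx
  end.

Definition smooth2 (f : R -> R -> R) : Prop := forall n, Ck n f.

Definition supported_in (phi : R -> R -> R) (a b c d : R) : Prop :=
  forall t x, ~ (a <= t <= b /\ c <= x <= d) -> phi t x = 0.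

Definition test_fn (phi : R -> R -> R) : Prop :=
  smooth2 phi /\ exists a b c d, 0 < a /\ a <= b /\ c <= d /\ supported_in phi a b c d.

Definition iint (f : R -> R -> R) (a b c d I : R) : Prop :=
  exists G : R -> R,
    (forall t, a <= t <= b ->
       exists pr : Riemann_integrable (f t) c d, RiemannInt pr = G t) /\
    exists pr : Riemann_integrable G a b, RiemannInt pr = I.

Definition H (y : R) : R := if Rlt_dec 0 y then 1 else 0.

Definition three_state (s1 s2 l m r : R) (t x : R) : R :=
  if Rlt_dec x (s1 * t) then l
  else if Rlt_dec (s2 * t) x then r else m.

(** The two-shock Riemann solution of the perturbed Brio system:
    intermediate state (us, vs) satisfying the conditions of the context. *)
Definition two_shock (e1 e2 um vm up vp us vs : R) : Prop :=
  Rmax vm vp < vs /\ up < us /\ us < um /\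
  us = um + (vs - vm) * (e2 - sqrt (e2 ^ 2 + 4 * e1 * (vs + vm) ^ 2)) / (vs + vm) /\
  up = us + (vp - vs) * (e2 + sqrt (e2 ^ 2 + 4 * e1 * (vs + vp) ^ 2)) / (vs + vp).

Definition sigma1 (e2 um vm us vs : R) : R :=
  um + vs * (us - um) / (vs - vm) - e2.
Definition sigma2 (e2 up vp us vs : R) : R :=
  up + vs * (up - us) / (vp - vs) - e2.

(** Convergence in D'({t>0}) as e1 -> 0+ of the family f e1 (defined for
    0 < e1 < e0) to the distribution  g + w(t) delta_{x = s t},
    tested against phi. *)
Definition dist_conv_at (e0 : R) (f : R -> R -> R -> R) (g : R -> R -> R)
    (w : R -> R) (s : R) (phi : R -> R -> R) : Prop :=
  forall a b c d, 0 < a -> a <= b -> c <= d -> supported_in phi a b c d ->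
    exists (I : R -> R) (J : R),
      (forall e1, 0 < e1 < e0 -> iint (fun t x => f e1 t x * phi t x) a b c d (I e1)) /\
      (exists K, iint (fun t x => g t x * phi t x) a b c d K /\
         exists pr : Riemann_integrable (fun t => w t * phi t (s * t)) a b,
           J = K + RiemannInt pr) /\
      (forall eps, 0 < eps -> exists del, 0 < del /\
         forall e1, 0 < e1 < Rmin del e0 -> Rabs (I e1 - J) < eps).

Definition dist_conv (e0 : R) (f : R -> R -> R -> R) (g : R -> R -> R)
    (w : R -> R) (s : R) : Prop :=
  forall phi, test_fn phi -> dist_conv_at e0 f g w s phi.

(* Write q = sqrt e1 and S1, S2 for the square roots in the two shock curves.  The
   Hugoniot relations give um - up <= 2 e2 + 8 q vs, so vs grows like 1 / q, and they
   express us - (sigma + e2), sigma1 - sigma and sigma2 - sigma exactly through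
   S2 - S1, vm (S1 - e2) / (vs + vm) and vp (S2 + e2) / (vs + vp), all O(q); moreover
   vs (sigma2 - sigma1) minus the growth rate of the delta weight is a combination of
   the two speed defects.  Tested against phi, a three-state profile l | m | r differs
   from the single jump at x = sigma t only through its middle strip, of width
   (sigma2 - sigma1) t; by uniform continuity of phi that strip contributes
   m (sigma2 - sigma1) t phi (t, sigma t) up to o(1), which tends to 0 for u and to the
   delta weight for v.  Existence for small e1 is the intermediate value theorem in vs. *)

From Stdlib Require Import Reals Lra Psatz FunctionalExtensionality.
From Coquelicot Require Import Coquelicot.
Open Scope R_scope.

Ltac Rminmax_lra :=
  unfold Rmin, Rmax in *;
  repeat match goal with
         | |- context [Rle_dec ?x ?y] => destruct (Rle_dec x y)
         | H : context [Rle_dec ?x ?y] |- _ => destruct (Rle_dec x y)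
         end; lra.

(* The shape of the limits e1 -> 0+ in [dist_conv_at] and [theorem6p1], so that
   [vanishes] unfolds to them. *)
Definition near0 (e0 : R) (P : R -> Prop) : Prop :=
  exists del, 0 < del /\ forall e, 0 < e < Rmin del e0 -> P e.

Definition vanishes (e0 : R) (f : R -> R) : Prop :=
  forall eps, 0 < eps -> near0 e0 (fun e => Rabs (f e) < eps).

Lemma near0_and (e0 : R) (P Q : R -> Prop) :
  near0 e0 P -> near0 e0 Q -> near0 e0 (fun e => P e /\ Q e).
Proof.
  intros [d1 [Hd1 HP]] [d2 [Hd2 HQ]].
  exists (Rmin d1 d2). split; [now apply Rmin_glb_lt|].
  intros e He. split; [apply HP | apply HQ]; Rminmax_lra.
Qed.

Lemma vanishes_of_sqrt_bound (e0 K : R) (f : R -> R) :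
  (forall e, 0 < e < Rmin 1 e0 -> Rabs (f e) <= K * sqrt e) -> vanishes e0 f.
Proof.
  intros Hf eps Heps.
  pose proof (Rabs_pos K) as HK.
  set (q := eps / (Rabs K + 1)).
  assert (Hq : 0 < q) by (apply Rdiv_lt_0_compat; lra).
  assert (Eq : q * (Rabs K + 1) = eps) by (unfold q; field; lra).
  exists (Rmin 1 (q * q)). split; [apply Rmin_glb_lt; nra|].
  intros e He.
  assert (Hsq : sqrt e < q).
  { rewrite <- (sqrt_square q) by lra. apply sqrt_lt_1_alt. Rminmax_lra. }
  pose proof (sqrt_pos e). pose proof (Rle_abs K).
  eapply Rle_lt_trans; [apply Hf; Rminmax_lra | nra].
Qed.

Lemma abs_RInt_le_const_abs (g : R -> R) (a b M : R) :
  ex_RInt g a b -> (forall x, Rmin a b <= x <= Rmax a b -> Rabs (g x) <= M) ->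
  Rabs (RInt g a b) <= Rabs (b - a) * M.
Proof.
  intros Hg HM. apply (norm_RInt_le_const_abs g a b); [exact HM|].
  exact (RInt_correct g a b Hg).
Qed.

Lemma RInt_Chasles_sub (p : R -> R) (c u v : R) :
  (forall a b, ex_RInt p a b) -> RInt p c v - RInt p c u = RInt p u v.
Proof.
  intros Hp. rewrite <- (RInt_Chasles p c u v) by auto.
  change (plus ?x ?y) with (x + y). ring.
Qed.

Lemma RInt_sub_decomp (f g : R -> R) (c y0 y : R) :
  (forall a b, ex_RInt f a b) -> (forall a b, ex_RInt g a b) ->
  RInt f c y - RInt g c y0 = RInt f y0 y + RInt (fun x => f x - g x) c y0.
Proof.
  intros Hf Hg. rewrite (RInt_minus (V := R_CompleteNormedModule)) by auto.
  rewrite <- (RInt_Chasles_sub f c y0 y) by exact Hf.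
  change minus with Rminus. ring.
Qed.

Lemma RiemannInt_RInt (g : R -> R) (a b : R) :
  ex_RInt g a b -> exists pr : Riemann_integrable g a b, RiemannInt pr = RInt g a b.
Proof.
  intros Hg. exists (ex_RInt_Reals_0 _ _ _ Hg). symmetry. apply RInt_Reals.
Qed.

Lemma iint_RInt (f : R -> R -> R) (G : R -> R) (a b c d : R) :
  (forall t, a <= t <= b -> is_RInt (f t) c d (G t)) -> ex_RInt G a b ->
  iint f a b c d (RInt G a b).
Proof.
  intros Hf HG. exists G. split; [|now apply RiemannInt_RInt].
  intros t Ht. rewrite <- (is_RInt_unique _ _ _ _ (Hf t Ht)).
  apply RiemannInt_RInt. eexists. exact (Hf t Ht).
Qed.

Lemma ex_RInt_continuity_pt (g : R -> R) (a b : R) :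
  (forall t, continuity_pt g t) -> ex_RInt g a b.
Proof.
  intros Hg. apply (@ex_RInt_continuous R_CompleteNormedModule).
  intros t _. now apply continuity_pt_filterlim.
Qed.

Lemma is_RInt_mul_const_on (p h : R -> R) (u v k : R) :
  ex_RInt p u v -> (forall x, Rmin u v < x < Rmax u v -> h x * p x = k * p x) ->
  is_RInt (fun x => h x * p x) u v (k * RInt p u v).
Proof.
  intros Hp Hh.
  apply (is_RInt_ext (fun x => scal k (p x))); [intros x Hx; symmetry; now apply Hh|].
  apply (is_RInt_scal (V := R_NormedModule)). exact (RInt_correct p u v Hp).
Qed.

Lemma RInt_defect_le (f g h : R -> R) (a b B : R) : a <= b ->
  (forall t, continuity_pt f t) -> (forall t, continuity_pt g t) ->
  (forall t, continuity_pt h t) -> (forall t, a <= t <= b -> Rabs (f t - g t - h t) <= B) ->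
  Rabs (RInt f a b - (RInt g a b + RInt h a b)) <= (b - a) * B.
Proof.
  intros Hab Hf Hg Hh HB.
  assert (Hex : forall u, (forall t, continuity_pt u t) -> ex_RInt u a b)
    by (intros; now apply ex_RInt_continuity_pt).
  replace (RInt f a b - (RInt g a b + RInt h a b)) with (RInt (fun t => f t - g t - h t) a b).
  - apply abs_RInt_le_const; [exact Hab | | exact HB].
    apply Hex. intros t. now apply continuity_pt_minus; [apply continuity_pt_minus|].
  - rewrite (RInt_minus (V := R_CompleteNormedModule)).
    + rewrite (RInt_minus (V := R_CompleteNormedModule)) by now apply Hex.
      unfold minus, plus, opp; simpl. ring.
    + apply (ex_RInt_minus (V := R_NormedModule)); now apply Hex.
    + now apply Hex.
Qed.

Definition piecewise_pairing (P : R -> R) (d y1 y2 l m r : R) : R :=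
  l * P y1 + m * (P y2 - P y1) + r * (P d - P y2).

Lemma is_RInt_piecewise (p h : R -> R) (c d y1 y2 l m r : R) :
  (forall a b, ex_RInt p a b) -> (forall x, x < c \/ d < x -> p x = 0) -> y1 <= y2 ->
  (forall x, x < y1 -> h x = l) -> (forall x, y1 < x < y2 -> h x = m) ->
  (forall x, y2 < x -> h x = r) ->
  is_RInt (fun x => h x * p x) c d (piecewise_pairing (RInt p c) d y1 y2 l m r).
Proof.
  intros Hp Hsupp H12 Hl Hm Hr.
  unfold piecewise_pairing. rewrite !RInt_Chasles_sub by exact Hp.
  assert (I1 : is_RInt (fun x => h x * p x) c y1 (l * RInt p c y1)).
  { apply is_RInt_mul_const_on; [apply Hp|]. intros x Hx.
    destruct (Rle_dec c y1); [rewrite Hl by Rminmax_lra | rewrite Hsupp by Rminmax_lra]; ring. }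
  assert (I2 : is_RInt (fun x => h x * p x) y1 y2 (m * RInt p y1 y2)).
  { apply is_RInt_mul_const_on; [apply Hp|]. intros x Hx. rewrite Hm by Rminmax_lra. ring. }
  assert (I3 : is_RInt (fun x => h x * p x) y2 d (r * RInt p y2 d)).
  { apply is_RInt_mul_const_on; [apply Hp|]. intros x Hx.
    destruct (Rle_dec y2 d); [rewrite Hr by Rminmax_lra | rewrite Hsupp by Rminmax_lra]; ring. }
  exact (is_RInt_Chasles _ _ _ _ _ _ (is_RInt_Chasles _ _ _ _ _ _ I1 I2) I3).
Qed.

Lemma Rmin_Rmax_interval (u v x lo hi : R) :
  Rmin u v <= x <= Rmax u v -> lo <= u <= hi -> lo <= v <= hi -> lo <= x <= hi.
Proof. intros. Rminmax_lra. Qed.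

Lemma piecewise_pairing_collapse (p : R -> R) (c d l m r y1 y2 z W : R) :
  (forall a b, ex_RInt p a b) ->
  piecewise_pairing (RInt p c) d y1 y2 l m r - piecewise_pairing (RInt p c) d z z l 0 r - W * p z
  = l * RInt p z y1 - r * RInt p z y2 + m * RInt (fun x => p x - p z) y1 y2
    + (m * (y2 - y1) - W) * p z.
Proof.
  intros Hp. unfold piecewise_pairing.
  rewrite (RInt_minus (V := R_CompleteNormedModule) p (fun _ => p z)), RInt_const
    by (apply Hp || apply ex_RInt_const).
  rewrite <- (RInt_Chasles_sub p c z y1), <- (RInt_Chasles_sub p c z y2),
    <- (RInt_Chasles_sub p c y1 y2) by exact Hp.
  unfold minus, plus, opp, scal; simpl. unfold mult; simpl. ring.
Qed.

Lemma piecewise_pairing_defect (p : R -> R) (c d l m r y1 y2 z W del M om : R) :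
  (forall a b, ex_RInt p a b) -> Rabs (y1 - z) <= del -> Rabs (y2 - z) <= del ->
  (forall x, Rabs (x - z) <= del -> Rabs (p x) <= M /\ Rabs (p x - p z) <= om) ->
  Rabs (piecewise_pairing (RInt p c) d y1 y2 l m r
        - piecewise_pairing (RInt p c) d z z l 0 r - W * p z)
  <= (Rabs l + Rabs r) * M * del + Rabs (m * (y2 - y1)) * om
     + Rabs (m * (y2 - y1) - W) * M.
Proof.
  intros Hp H1 H2 Hnear.
  assert (Hin : forall u v x, Rabs (u - z) <= del -> Rabs (v - z) <= del ->
                  Rmin u v <= x <= Rmax u v -> Rabs (x - z) <= del).
  { intros u v x Hu Hv Hx. apply Rabs_le_between'.
    apply Rabs_le_between' in Hu. apply Rabs_le_between' in Hv.
    exact (Rmin_Rmax_interval u v x _ _ Hx Hu Hv). }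
  assert (Hz : Rabs (z - z) <= del)
    by (rewrite Rminus_diag, Rabs_R0; pose proof (Rabs_pos (y1 - z)); lra).
  pose proof (proj1 (Hnear z Hz)) as HMz. pose proof (Rle_trans _ _ _ (Rabs_pos _) HMz).
  assert (Hshift : forall y, Rabs (y - z) <= del -> Rabs (RInt p z y) <= M * del).
  { intros y Hy. rewrite Rmult_comm.
    eapply Rle_trans; [apply abs_RInt_le_const_abs; [apply Hp|]|].
    - intros x Hx. apply Hnear, (Hin z y); auto.
    - now apply Rmult_le_compat_r. }
  assert (Hmid : Rabs (RInt (fun x => p x - p z) y1 y2) <= Rabs (y2 - y1) * om).
  { apply abs_RInt_le_const_abs.
    - apply (ex_RInt_minus (V := R_NormedModule)); [apply Hp | apply ex_RInt_const].
    - intros x Hx. apply Hnear, (Hin y1 y2); auto. }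
  rewrite piecewise_pairing_collapse by exact Hp.
  set (R3 := RInt (fun x => p x - p z) y1 y2) in *.
  set (w := m * (y2 - y1) - W).
  assert (T : Rabs (l * RInt p z y1 - r * RInt p z y2 + m * R3 + w * p z)
              <= Rabs l * Rabs (RInt p z y1) + Rabs r * Rabs (RInt p z y2)
                 + Rabs m * Rabs R3 + Rabs w * Rabs (p z)).
  { unfold Rminus. rewrite <- !Rabs_mult, <- (Rabs_Ropp (r * _)).
    eapply Rle_trans; [apply Rabs_triang|]. apply Rplus_le_compat_r.
    eapply Rle_trans; [apply Rabs_triang|]. apply Rplus_le_compat_r.
    apply Rabs_triang. }
  pose proof (Rmult_le_compat_l _ _ _ (Rabs_pos l) (Hshift y1 H1)).
  pose proof (Rmult_le_compat_l _ _ _ (Rabs_pos r) (Hshift y2 H2)).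
  pose proof (Rmult_le_compat_l _ _ _ (Rabs_pos m) Hmid).
  pose proof (Rmult_le_compat_l _ _ _ (Rabs_pos w) HMz).
  rewrite Rabs_mult. lra.
Qed.

Lemma cont2_comp (f : R -> R -> R) (u v : R -> R) (t0 : R) :
  cont2 f -> continuity_pt u t0 -> continuity_pt v t0 ->
  continuity_pt (fun t => f (u t) (v t)) t0.
Proof.
  intros Hf Hu Hv eps Heps.
  destruct (Hf (u t0) (v t0) eps Heps) as [d [Hd Hf']].
  destruct (Hu d Hd) as [du [Hdu Hu']]. destruct (Hv d Hd) as [dv [Hdv Hv']].
  exists (Rmin du dv). split; [now apply Rmin_glb_lt|].
  intros t [Ht Htt]. simpl in *. unfold R_dist in *. apply Hf'.
  - apply Hu'. split; [exact Ht | simpl; unfold R_dist; Rminmax_lra].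
  - apply Hv'. split; [exact Ht | simpl; unfold R_dist; Rminmax_lra].
Qed.

Lemma cont2_ex_RInt (phi : R -> R -> R) (t a b : R) : cont2 phi -> ex_RInt (phi t) a b.
Proof.
  intros Hphi. apply ex_RInt_continuity_pt. intros x.
  apply (cont2_comp phi (fun _ => t) (fun x => x)); [exact Hphi | | apply continuity_pt_id].
  apply continuity_pt_const. now intros ??.
Qed.

Lemma cont2_uniform (f : R -> R -> R) (a b c d : R) : cont2 f ->
  forall eps, 0 < eps -> exists del, 0 < del /\
    forall t x t' x', a <= t <= b -> c <= x <= d -> a <= t' <= b -> c <= x' <= d ->
      Rabs (t' - t) < del -> Rabs (x' - x) < del -> Rabs (f t' x' - f t x) < eps.
Proof.
  intros Hf eps Heps.
  assert (H2d : forall t x, a <= t <= b -> c <= x <= d -> continuity_2d_pt f t x).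
  { intros t x _ _ e. destruct (Hf t x e (cond_pos e)) as [del [Hdel Hf']].
    exists (mkposreal del Hdel). exact Hf'. }
  destruct (uniform_continuity_2d f a b c d H2d (mkposreal eps Heps)) as [del Hdel].
  exists del. split; [apply cond_pos|]. intros. now apply Hdel.
Qed.

(* Walk from the corner (a, c) to (t, x) in N steps shorter than the modulus of
   uniform continuity for 1: each step changes f by less than 1. *)
Lemma cont2_bounded (f : R -> R -> R) (a b c d : R) : cont2 f -> a <= b -> c <= d ->
  exists M, forall t x, a <= t <= b -> c <= x <= d -> Rabs (f t x) <= M.
Proof.
  intros Hf Hab Hcd.
  destruct (cont2_uniform f a b c d Hf 1 Rlt_0_1) as [del [Hdel Hu]].
  destruct (archimed_cor1 (del / (b - a + (d - c) + 1))) as [N [HN HN0]];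
    [apply Rdiv_lt_0_compat; lra|].
  assert (HNpos : 0 < INR N) by (apply lt_0_INR; exact HN0).
  assert (Hstep : (b - a) / INR N < del /\ (d - c) / INR N < del).
  { assert (Hinv : 0 < / INR N) by (apply Rinv_0_lt_compat; lra).
    assert ((b - a + (d - c) + 1) * / INR N < del).
    { apply Rmult_lt_reg_r with (/ (b - a + (d - c) + 1)); [apply Rinv_0_lt_compat; lra|].
      replace ((b - a + (d - c) + 1) * / INR N * / (b - a + (d - c) + 1)) with (/ INR N)
        by (field; lra). exact HN. }
    unfold Rdiv. split; nra. }
  exists (Rabs (f a c) + INR N). intros t x Ht Hx.
  set (pt := fun k : nat => a + INR k / INR N * (t - a)).
  set (px := fun k : nat => c + INR k / INR N * (x - c)).
  assert (Hin : forall k, (k <= N)%nat -> a <= pt k <= b /\ c <= px k <= d).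
  { intros k Hk. apply le_INR in Hk. pose proof (pos_INR k).
    assert (0 <= INR k / INR N <= 1).
    { split; [apply Rdiv_le_0_compat; lra|].
      apply Rmult_le_reg_r with (INR N); [lra|]. field_simplify; lra. }
    unfold pt, px. split; nra. }
  assert (Hwalk : forall k, (k <= N)%nat -> Rabs (f (pt k) (px k)) <= Rabs (f a c) + INR k).
  { induction k as [|k IH]; intros Hk.
    - unfold pt, px. simpl. unfold Rdiv. rewrite !Rmult_0_l, !Rplus_0_r. lra.
    - assert (Hclose : Rabs (f (pt (S k)) (px (S k)) - f (pt k) (px k)) < 1).
      { destruct (Hin k ltac:(lia)) as [Htk Hxk].
        destruct (Hin (S k) Hk) as [Htk' Hxk'].
        assert (Et : pt (S k) - pt k = (t - a) / INR N) by (unfold pt; rewrite S_INR; field; lra).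
        assert (Ex : px (S k) - px k = (x - c) / INR N) by (unfold px; rewrite S_INR; field; lra).
        assert (0 <= (t - a) / INR N <= (b - a) / INR N /\ 0 <= (x - c) / INR N <= (d - c) / INR N).
        { unfold Rdiv. pose proof (Rinv_0_lt_compat _ HNpos). split; split; nra. }
        apply Hu; auto; [rewrite Et | rewrite Ex]; rewrite Rabs_right; lra. }
      rewrite S_INR. pose proof (IH ltac:(lia)).
      pose proof (Rabs_triang_inv (f (pt (S k)) (px (S k))) (f (pt k) (px k))). lra. }
  replace t with (pt N) by (unfold pt; field; lra).
  replace x with (px N) by (unfold px; field; lra).
  apply Hwalk. lia.
Qed.

Lemma cont2_near_line (phi : R -> R -> R) (sg a b : R) : cont2 phi -> 0 <= a -> a <= b ->
  exists M, 0 <= M /\ forall om, 0 < om -> exists del, 0 < del <= 1 /\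
    forall t x, a <= t <= b -> Rabs (x - sg * t) <= del ->
      Rabs (phi t x) <= M /\ Rabs (phi t x - phi t (sg * t)) < om.
Proof.
  intros Hphi Ha Hab. pose proof (Rabs_pos sg).
  set (X := Rabs sg * b + 1).
  assert (Hline : forall t, a <= t <= b -> Rabs (sg * t) <= X - 1).
  { intros t Ht. rewrite Rabs_mult, (Rabs_right t) by lra. unfold X.
    apply Rle_trans with (Rabs sg * b); [apply Rmult_le_compat_l|]; lra. }
  assert (Hbox : forall t x, a <= t <= b -> Rabs (x - sg * t) <= 1 -> - X <= x <= X).
  { intros t x Ht Hx. apply Rabs_le_between' in Hx.
    pose proof (proj1 (Rabs_le_between _ _) (Hline t Ht)). lra. }
  destruct (cont2_bounded phi a b (- X) X Hphi Hab) as [M HM]; [unfold X; nra|].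
  exists M. split.
  { apply (Rle_trans _ _ _ (Rabs_pos (phi a (sg * a)))), HM; [lra|].
    apply (Hbox a); [lra | rewrite Rminus_diag, Rabs_R0; lra]. }
  intros om Hom.
  destruct (cont2_uniform phi a b (- X) X Hphi om Hom) as [du [Hdu Hu]].
  exists (Rmin 1 (du / 2)).
  split; [split; [apply Rmin_glb_lt; lra | apply Rmin_l]|].
  intros t x Ht Hx.
  assert (Hx1 : Rabs (x - sg * t) <= 1) by (eapply Rle_trans; [exact Hx | apply Rmin_l]).
  split; [apply HM; [exact Ht | now apply (Hbox t)]|].
  apply Hu; try lra; [apply (Hbox t); [exact Ht | rewrite Rminus_diag, Rabs_R0; lra]
                     | now apply (Hbox t) | rewrite Rminus_diag, Rabs_R0; lra |].
  assert (Rmin 1 (du / 2) <= du / 2) by apply Rmin_r. lra.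
Qed.

Lemma continuity_pt_RInt_along (phi : R -> R -> R) (c : R) (y : R -> R) (t0 : R) :
  cont2 phi -> continuity_pt y t0 -> continuity_pt (fun t => RInt (phi t) c (y t)) t0.
Proof.
  intros Hphi Hy eps Heps.
  pose proof (Rabs_pos c). pose proof (Rabs_pos (y t0)). pose proof (Rabs_pos (y t0 - c)).
  set (X := Rabs c + Rabs (y t0) + 1).
  assert (Hc : - X <= c <= X) by (apply Rabs_le_between; unfold X; lra).
  assert (Hy0 : - X <= y t0 <= X) by (apply Rabs_le_between; unfold X; lra).
  destruct (cont2_bounded phi (t0 - 1) (t0 + 1) (- X) X Hphi) as [M HM]; try lra.
  assert (HM0 : 0 <= M) by (apply (Rle_trans _ _ _ (Rabs_pos (phi t0 c))), HM; lra).
  set (om := eps / (2 * (Rabs (y t0 - c) + 1))).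
  assert (Hom : 0 < om) by (apply Rdiv_lt_0_compat; lra).
  destruct (cont2_uniform phi (t0 - 1) (t0 + 1) (- X) X Hphi om Hom) as [du [Hdu Hu]].
  set (ey := Rmin 1 (eps / (2 * (M + 1)))).
  assert (Hey : 0 < ey) by (apply Rmin_glb_lt; [lra | apply Rdiv_lt_0_compat; lra]).
  destruct (Hy ey Hey) as [dy [Hdy Hy']].
  exists (Rmin 1 (Rmin du dy)). split; [apply Rmin_glb_lt; [lra | now apply Rmin_glb_lt]|].
  intros t [Ht Htt]. simpl in *. unfold R_dist in *.
  assert (Htt0 : t0 - 1 <= t <= t0 + 1) by (apply Rabs_le_between'; Rminmax_lra).
  assert (Hyt : Rabs (y t - y t0) < ey).
  { apply Hy'. split; [exact Ht | simpl; unfold R_dist; Rminmax_lra]. }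
  assert (Hyt' : - X <= y t <= X).
  { apply Rabs_lt_between' in Hyt. pose proof (proj1 (Rabs_le_between (y t0) _) (Rle_refl _)).
    assert (ey <= 1) by apply Rmin_l. unfold X. lra. }
  assert (B1 : Rabs (RInt (phi t) (y t0) (y t)) <= Rabs (y t - y t0) * M).
  { apply abs_RInt_le_const_abs; [now apply cont2_ex_RInt|].
    intros x Hx. apply HM; [lra | exact (Rmin_Rmax_interval _ _ _ _ _ Hx Hy0 Hyt')]. }
  assert (B2 : Rabs (RInt (fun x => phi t x - phi t0 x) c (y t0)) <= Rabs (y t0 - c) * om).
  { apply abs_RInt_le_const_abs.
    - apply (ex_RInt_minus (V := R_NormedModule)); now apply cont2_ex_RInt.
    - intros x Hx. pose proof (Rmin_Rmax_interval _ _ _ _ _ Hx Hc Hy0).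
      left. apply Hu; try lra; [Rminmax_lra | rewrite Rminus_diag, Rabs_R0; lra]. }
  rewrite (RInt_sub_decomp (phi t) (phi t0)) by (intros; now apply cont2_ex_RInt).
  assert (E1 : Rabs (y t - y t0) * M <= eps / 2 - eps / (2 * (M + 1))).
  { replace (eps / 2 - eps / (2 * (M + 1))) with (eps / (2 * (M + 1)) * M) by (field; lra).
    apply Rmult_le_compat_r; [exact HM0|].
    assert (ey <= eps / (2 * (M + 1))) by apply Rmin_r. lra. }
  assert (E2 : Rabs (y t0 - c) * om = eps / 2 - om) by (unfold om; field; lra).
  assert (0 < eps / (2 * (M + 1))) by (apply Rdiv_lt_0_compat; lra).
  eapply Rle_lt_trans; [apply Rabs_triang | lra].
Qed.

Definition three_state_pairing (phi : R -> R -> R) (c d s1 s2 l m r t : R) : R :=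
  piecewise_pairing (RInt (phi t) c) d (s1 * t) (s2 * t) l m r.

Lemma continuity_pt_lin (s t : R) : continuity_pt (fun t => s * t) t.
Proof.
  apply (continuity_pt_mult (fun _ => s) (fun t => t));
    [apply continuity_pt_const; now intros ?? | apply continuity_pt_id].
Qed.

Section Pairing.

Variables (phi : R -> R -> R) (a b c d : R).
Hypotheses (Hphi : cont2 phi) (Hsupp : supported_in phi a b c d).

Lemma is_RInt_three_state (s1 s2 l m r t : R) : 0 <= t -> s1 <= s2 ->
  is_RInt (fun x => three_state s1 s2 l m r t x * phi t x) c d
    (three_state_pairing phi c d s1 s2 l m r t).
Proof.
  intros Ht H12. unfold three_state.
  apply is_RInt_piecewise.
  - intros; now apply cont2_ex_RInt.
  - intros x Hx. apply Hsupp. lra.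
  - now apply Rmult_le_compat_r.
  - intros x Hx. destruct (Rlt_dec x (s1 * t)); lra.
  - intros x Hx. destruct (Rlt_dec x (s1 * t)); [lra|]. destruct (Rlt_dec (s2 * t) x); lra.
  - intros x Hx. destruct (Rlt_dec x (s1 * t)).
    + assert (s1 * t <= s2 * t) by (now apply Rmult_le_compat_r). lra.
    + destruct (Rlt_dec (s2 * t) x); lra.
Qed.

Lemma is_RInt_heaviside (sg l r t : R) :
  is_RInt (fun x => (l + (r - l) * H (x - sg * t)) * phi t x) c d
    (three_state_pairing phi c d sg sg l 0 r t).
Proof.
  unfold H. apply is_RInt_piecewise.
  - intros; now apply cont2_ex_RInt.
  - intros x Hx. apply Hsupp. lra.
  - lra.
  - intros x Hx. destruct (Rlt_dec 0 (x - sg * t)); lra.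
  - intros x Hx. lra.
  - intros x Hx. destruct (Rlt_dec 0 (x - sg * t)); lra.
Qed.

Lemma continuity_pt_three_state_pairing (s1 s2 l m r t : R) :
  continuity_pt (three_state_pairing phi c d s1 s2 l m r) t.
Proof.
  unfold three_state_pairing, piecewise_pairing.
  repeat first [ apply continuity_pt_lin | apply continuity_pt_const; now intros ??
               | apply continuity_pt_RInt_along; [exact Hphi|]
               | apply continuity_pt_minus | apply continuity_pt_plus | apply continuity_pt_mult ].
Qed.

Lemma continuity_pt_line_weight (W sg t : R) :
  continuity_pt (fun t => W * t * phi t (sg * t)) t.
Proof.
  apply (continuity_pt_mult (fun t => W * t) (fun t => phi t (sg * t)));
    [apply continuity_pt_lin | apply cont2_comp; [exact Hphi | apply continuity_pt_id |
                                                  apply continuity_pt_lin]].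
Qed.

Lemma three_state_pairing_defect (l r sg W s1 s2 m t eta M om : R) :
  0 <= t -> eta <= 1 ->
  Rabs (s1 - sg) <= eta -> Rabs (s2 - sg) <= eta -> Rabs (m * (s2 - s1) - W) <= eta ->
  (forall x, Rabs (x - sg * t) <= t * eta ->
     Rabs (phi t x) <= M /\ Rabs (phi t x - phi t (sg * t)) <= om) ->
  Rabs (three_state_pairing phi c d s1 s2 l m r t - three_state_pairing phi c d sg sg l 0 r t
        - W * t * phi t (sg * t))
  <= ((Rabs l + Rabs r + 1) * M * eta + (Rabs W + 1) * om) * t.
Proof.
  intros Ht Heta1 Hs1 Hs2 Hm Hnear.
  assert (Hclose : forall s, Rabs (s - sg) <= eta -> Rabs (s * t - sg * t) <= t * eta).
  { intros s Hs. replace (s * t - sg * t) with (t * (s - sg)) by ring.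
    rewrite Rabs_mult, (Rabs_right t) by lra. now apply Rmult_le_compat_l. }
  assert (Hzero : Rabs (sg - sg) <= eta)
    by (rewrite Rminus_diag, Rabs_R0; pose proof (Rabs_pos (s1 - sg)); lra).
  destruct (Hnear (sg * t) (Hclose sg Hzero)) as [HM0 Hom0].
  pose proof (Rle_trans _ _ _ (Rabs_pos _) HM0) as HM.
  pose proof (Rle_trans _ _ _ (Rabs_pos _) Hom0) as Hom.
  eapply Rle_trans.
  { apply (piecewise_pairing_defect (phi t) c d l m r (s1 * t) (s2 * t) (sg * t) (W * t)
                                    (t * eta) M om);
      [intros; now apply cont2_ex_RInt | now apply Hclose | now apply Hclose | exact Hnear]. }
  replace (m * (s2 * t - s1 * t)) with (m * (s2 - s1) * t) by ring.
  replace (m * (s2 - s1) * t - W * t) with ((m * (s2 - s1) - W) * t) by ring.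
  rewrite (Rabs_mult (m * (s2 - s1)) t), (Rabs_mult (m * (s2 - s1) - W) t), (Rabs_right t) by lra.
  assert (Hstrength : Rabs (m * (s2 - s1)) <= Rabs W + 1).
  { replace (m * (s2 - s1)) with ((m * (s2 - s1) - W) + W) by ring.
    pose proof (Rabs_triang (m * (s2 - s1) - W) W). lra. }
  pose proof (Rabs_pos l). pose proof (Rabs_pos r).
  assert (Rabs (m * (s2 - s1)) * t * om <= (Rabs W + 1) * t * om)
    by (apply Rmult_le_compat_r; [lra | apply Rmult_le_compat_r; lra]).
  assert (Rabs (m * (s2 - s1) - W) * t * M <= eta * t * M)
    by (apply Rmult_le_compat_r; [lra | apply Rmult_le_compat_r; lra]).
  lra.
Qed.

Lemma three_state_pairing_near_delta (l r sg W eps : R) : 0 < a -> a <= b -> 0 < eps ->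
  exists eta, 0 < eta /\ forall s1 s2 m,
    Rabs (s1 - sg) < eta -> Rabs (s2 - sg) < eta -> Rabs (m * (s2 - s1) - W) < eta ->
    Rabs (RInt (three_state_pairing phi c d s1 s2 l m r) a b
          - (RInt (three_state_pairing phi c d sg sg l 0 r) a b
             + RInt (fun t => W * t * phi t (sg * t)) a b)) < eps.
Proof.
  intros Ha Hab Heps.
  destruct (cont2_near_line phi sg a b Hphi (Rlt_le _ _ Ha) Hab) as [M [HM Hline]].
  set (eps' := eps / (b - a + 1)).
  assert (Heps' : 0 < eps') by (apply Rdiv_lt_0_compat; lra).
  pose proof (Rabs_pos l). pose proof (Rabs_pos r). pose proof (Rabs_pos W).
  set (om := eps' / (2 * ((Rabs W + 1) * b + 1))).
  assert (Hom : 0 < om) by (apply Rdiv_lt_0_compat; nra).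
  destruct (Hline om Hom) as [del [Hdel Hnear]].
  set (A := (Rabs l + Rabs r + 1) * M * b).
  assert (HA : 0 <= A) by (unfold A; apply Rmult_le_pos; nra).
  exists (Rmin 1 (Rmin (del / b) (eps' / (2 * (A + 1))))).
  split; [apply Rmin_glb_lt; [lra | apply Rmin_glb_lt; apply Rdiv_lt_0_compat; lra]|].
  intros s1 s2 m Hs1 Hs2 Hm.
  set (eta := Rmin 1 (Rmin (del / b) (eps' / (2 * (A + 1))))) in *.
  assert (Heta : 0 < eta) by (pose proof (Rabs_pos (s1 - sg)); lra).
  assert (Hmin : eta <= 1 /\ eta <= del / b /\ eta <= eps' / (2 * (A + 1)))
    by (unfold eta; Rminmax_lra).
  destruct Hmin as (Heta1 & Hetadel & HAeta).
  apply Rle_div_r in Hetadel; [|lra]. apply Rle_div_r in HAeta; [|lra].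
  assert (Hom' : (Rabs W + 1) * b * om = eps' / 2 - om) by (unfold om; field; nra).
  eapply Rle_lt_trans.
  { apply (RInt_defect_le _ _ _ a b (A * eta + (Rabs W + 1) * b * om) Hab);
      [ intro; apply continuity_pt_three_state_pairing
      | intro; apply continuity_pt_three_state_pairing
      | intro; apply continuity_pt_line_weight |].
    intros t Ht.
    eapply Rle_trans.
    - apply (three_state_pairing_defect l r sg W s1 s2 m t eta M om); try lra.
      intros x Hx. destruct (Hnear t x Ht) as [HMx Hox]; [|split; lra].
      apply Rle_trans with (t * eta); [exact Hx | nra].
    - replace (A * eta + (Rabs W + 1) * b * om)
        with (((Rabs l + Rabs r + 1) * M * eta + (Rabs W + 1) * om) * b) by (unfold A; ring).
      apply Rmult_le_compat_l; [|lra].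
      apply Rplus_le_le_0_compat; apply Rmult_le_pos; [apply Rmult_le_pos | | |]; lra. }
  assert (Eeps : (b - a) * eps' = eps - eps') by (unfold eps'; field; lra).
  apply Rle_lt_trans with ((b - a) * eps'); [apply Rmult_le_compat_l; lra | lra].
Qed.

End Pairing.

Lemma three_state_dist_conv (e0 : R) (s1 s2 m w : R -> R) (l r sg W : R) :
  (forall t, w t = W * t) ->
  (forall e, 0 < e < e0 -> s1 e <= s2 e) ->
  vanishes e0 (fun e => s1 e - sg) -> vanishes e0 (fun e => s2 e - sg) ->
  vanishes e0 (fun e => m e * (s2 e - s1 e) - W) ->
  dist_conv e0 (fun e t x => three_state (s1 e) (s2 e) l (m e) r t x)
    (fun t x => l + (r - l) * H (x - sg * t)) w sg.
Proof.
  intros Hw Hle H1 H2 H3 phi [Hsmooth _] a b c d Ha Hab Hcd Hsupp.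
  replace w with (fun t => W * t) by (extensionality t; now rewrite Hw).
  pose proof (Hsmooth 0%nat) as Hphi.
  exists (fun e => RInt (three_state_pairing phi c d (s1 e) (s2 e) l (m e) r) a b),
    (RInt (three_state_pairing phi c d sg sg l 0 r) a b
     + RInt (fun t => W * t * phi t (sg * t)) a b).
  split; [|split].
  - intros e He. apply iint_RInt.
    + intros t Ht.
      apply (is_RInt_three_state phi a b c d); [exact Hphi | exact Hsupp | lra | now apply Hle].
    + apply ex_RInt_continuity_pt. intros t. now apply continuity_pt_three_state_pairing.
  - exists (RInt (three_state_pairing phi c d sg sg l 0 r) a b). split.
    + apply iint_RInt.
      * intros t _. now apply (is_RInt_heaviside phi a b c d).
      * apply ex_RInt_continuity_pt. intros t. now apply continuity_pt_three_state_pairing.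
    + destruct (RiemannInt_RInt (fun t => W * t * phi t (sg * t)) a b) as [pr Hpr].
      * apply ex_RInt_continuity_pt. intros t. now apply continuity_pt_line_weight.
      * exists pr. now rewrite Hpr.
  - intros eps Heps.
    destruct (three_state_pairing_near_delta phi a b c d Hphi l r sg W eps Ha Hab Heps)
      as [eta [Heta Hnear]].
    destruct (near0_and _ _ _ (H1 eta Heta) (near0_and _ _ _ (H2 eta Heta) (H3 eta Heta)))
      as [del [Hdel Hevent]].
    exists del. split; [exact Hdel|]. intros e He.
    destruct (Hevent e He) as (Hs1 & Hs2 & Hm). now apply Hnear.
Qed.

Lemma sqrt_disc_sq (e1 e2 X : R) : 0 <= e1 ->
  0 <= sqrt (e2 ^ 2 + 4 * e1 * X ^ 2) /\
  sqrt (e2 ^ 2 + 4 * e1 * X ^ 2) * sqrt (e2 ^ 2 + 4 * e1 * X ^ 2)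
    = e2 * e2 + (2 * sqrt e1 * X) * (2 * sqrt e1 * X).
Proof.
  intros He1. split; [apply sqrt_pos|].
  rewrite sqrt_sqrt by nra.
  replace ((2 * sqrt e1 * X) * (2 * sqrt e1 * X)) with (4 * (sqrt e1 * sqrt e1) * X ^ 2) by ring.
  rewrite sqrt_sqrt by exact He1. ring.
Qed.

Lemma sqrt_disc_bounds (e1 e2 X : R) : 0 <= e1 -> 0 <= e2 -> 0 <= X ->
  e2 <= sqrt (e2 ^ 2 + 4 * e1 * X ^ 2) /\
  2 * sqrt e1 * X <= sqrt (e2 ^ 2 + 4 * e1 * X ^ 2) /\
  sqrt (e2 ^ 2 + 4 * e1 * X ^ 2) <= e2 + 2 * sqrt e1 * X.
Proof.
  intros He1 He2 HX. destruct (sqrt_disc_sq e1 e2 X He1) as [HS ES].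
  pose proof (sqrt_pos e1).
  set (S := sqrt (e2 ^ 2 + 4 * e1 * X ^ 2)) in *. set (k := 2 * sqrt e1 * X) in *.
  assert (0 <= k) by (unfold k; nra). nra.
Qed.

Lemma sqrt_disc_gt (e1 e2 X : R) : 0 < e1 -> 0 <= e2 -> 0 < X ->
  e2 < sqrt (e2 ^ 2 + 4 * e1 * X ^ 2).
Proof.
  intros He1 He2 HX. destruct (sqrt_disc_sq e1 e2 X (Rlt_le _ _ He1)) as [HS ES].
  pose proof (sqrt_lt_R0 e1 He1).
  assert (0 < 2 * sqrt e1 * X) by nra. nra.
Qed.

Lemma sqrt_disc_lipschitz (e1 e2 X Y : R) : 0 < e1 -> 0 < X -> 0 < Y ->
  Rabs (sqrt (e2 ^ 2 + 4 * e1 * Y ^ 2) - sqrt (e2 ^ 2 + 4 * e1 * X ^ 2))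
    <= 2 * sqrt e1 * Rabs (Y - X).
Proof.
  intros He1 HX HY.
  destruct (sqrt_disc_sq e1 e2 X (Rlt_le _ _ He1)) as [HSX EX].
  destruct (sqrt_disc_sq e1 e2 Y (Rlt_le _ _ He1)) as [HSY EY].
  pose proof (sqrt_lt_R0 e1 He1).
  set (SX := sqrt (e2 ^ 2 + 4 * e1 * X ^ 2)) in *. set (SY := sqrt (e2 ^ 2 + 4 * e1 * Y ^ 2)) in *.
  set (q := sqrt e1) in *.
  assert (LX : 2 * q * X <= SX) by nra. assert (LY : 2 * q * Y <= SY) by nra.
  assert (E : (SY - SX) * (SY + SX) = (2 * q * (Y - X)) * (2 * q * (Y + X))) by nra.
  apply Rmult_le_reg_r with (SY + SX); [nra|].
  rewrite <- (Rabs_right (SY + SX)) at 1 by nra.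
  rewrite <- Rabs_mult, E, Rabs_mult, (Rabs_right (2 * q * (Y + X))) by nra.
  rewrite Rabs_mult, (Rabs_right (2 * q)) by nra.
  pose proof (Rabs_pos (Y - X)).
  apply Rmult_le_compat_l; nra.
Qed.

(* Vanishes exactly at the intermediate densities for which the 1-shock curve from
   (um, vm) and the 2-shock curve into (up, vp) meet. *)
Definition hugoniot_mismatch (e1 e2 um vm up vp v : R) : R :=
  um + (v - vm) * (e2 - sqrt (e2 ^ 2 + 4 * e1 * (v + vm) ^ 2)) / (v + vm)
  + (vp - v) * (e2 + sqrt (e2 ^ 2 + 4 * e1 * (v + vp) ^ 2)) / (v + vp) - up.

Section Existence.

Variables (e1 e2 um vm up vp : R).
Hypotheses (He1 : 0 < e1) (He2 : 0 < e2) (Hvm : 0 < vm) (Hvp : 0 < vp).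

Lemma continuity_pt_hugoniot_mismatch (v : R) : 0 < v ->
  continuity_pt (hugoniot_mismatch e1 e2 um vm up vp) v.
Proof.
  intros Hv. apply continuity_pt_filterlim.
  apply (ex_derive_continuous (hugoniot_mismatch e1 e2 um vm up vp)).
  unfold hugoniot_mismatch.
  assert (0 < e1 * ((v + vm) * ((v + vm) * 1))) by (apply Rmult_lt_0_compat; nra).
  assert (0 < e1 * ((v + vp) * ((v + vp) * 1))) by (apply Rmult_lt_0_compat; nra).
  auto_derive. repeat split; nra.
Qed.

Lemma hugoniot_mismatch_pos :
  2 * sqrt e1 * (2 * Rmax vm vp + vm + vp) < um - up - 2 * e2 ->
  0 < hugoniot_mismatch e1 e2 um vm up vp (Rmax vm vp).
Proof.
  intros Hsmall. pose proof (Rmax_l vm vp). pose proof (Rmax_r vm vp).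
  set (v := Rmax vm vp) in *. unfold hugoniot_mismatch.
  destruct (sqrt_disc_bounds e1 e2 (v + vm)) as (L1 & _ & U1); try lra.
  destruct (sqrt_disc_bounds e1 e2 (v + vp)) as (L2 & _ & U2); try lra.
  set (S1 := sqrt (e2 ^ 2 + 4 * e1 * (v + vm) ^ 2)) in *.
  set (S2 := sqrt (e2 ^ 2 + 4 * e1 * (v + vp) ^ 2)) in *.
  assert (T1 : - (S1 - e2) <= (v - vm) * (e2 - S1) / (v + vm)) by (apply Rle_div_r; nra).
  assert (T2 : - (e2 + S2) <= (vp - v) * (e2 + S2) / (v + vp)) by (apply Rle_div_r; nra).
  lra.
Qed.

Lemma hugoniot_mismatch_neg (v : R) : Rmax vm vp <= v ->
  2 * sqrt e1 * (v - vm) > um - up + e2 ->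
  hugoniot_mismatch e1 e2 um vm up vp v < 0.
Proof.
  intros Hv Hlarge. pose proof (Rmax_l vm vp). pose proof (Rmax_r vm vp).
  unfold hugoniot_mismatch.
  destruct (sqrt_disc_bounds e1 e2 (v + vm)) as (_ & L1 & _); try lra.
  destruct (sqrt_disc_bounds e1 e2 (v + vp)) as (L2 & _ & _); try lra.
  set (S1 := sqrt (e2 ^ 2 + 4 * e1 * (v + vm) ^ 2)) in *.
  set (S2 := sqrt (e2 ^ 2 + 4 * e1 * (v + vp) ^ 2)) in *.
  pose proof (sqrt_pos e1).
  assert (T1 : (v - vm) * (e2 - S1) / (v + vm) <= e2 - 2 * sqrt e1 * (v - vm))
    by (apply Rle_div_l; nra).
  assert (T2 : (vp - v) * (e2 + S2) / (v + vp) <= 0) by (apply Rle_div_l; nra).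
  lra.
Qed.

Lemma two_shock_of_mismatch_root (v : R) : Rmax vm vp < v ->
  hugoniot_mismatch e1 e2 um vm up vp v = 0 ->
  two_shock e1 e2 um vm up vp
    (um + (v - vm) * (e2 - sqrt (e2 ^ 2 + 4 * e1 * (v + vm) ^ 2)) / (v + vm)) v.
Proof.
  intros Hv Hroot. pose proof (Rmax_l vm vp). pose proof (Rmax_r vm vp).
  unfold hugoniot_mismatch in Hroot.
  pose proof (sqrt_disc_gt e1 e2 (v + vm) He1 (Rlt_le _ _ He2) ltac:(lra)).
  destruct (sqrt_disc_bounds e1 e2 (v + vp)) as (L2 & _ & _); try lra.
  set (S1 := sqrt (e2 ^ 2 + 4 * e1 * (v + vm) ^ 2)) in *.
  set (S2 := sqrt (e2 ^ 2 + 4 * e1 * (v + vp) ^ 2)) in *.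
  assert (T1 : (v - vm) * (e2 - S1) / (v + vm) < 0) by (apply Rlt_div_l; nra).
  assert (T2 : (vp - v) * (e2 + S2) / (v + vp) < 0) by (apply Rlt_div_l; nra).
  unfold two_shock. fold S1 S2. repeat split; lra.
Qed.

End Existence.

Lemma two_shock_exists (e2 um vm up vp : R) :
  0 < e2 -> 0 < vm -> 0 < vp -> up < um - 2 * e2 ->
  exists e0, 0 < e0 /\ forall e1, 0 < e1 < e0 ->
    exists us vs, two_shock e1 e2 um vm up vp us vs.
Proof.
  intros He2 Hvm Hvp Hgap.
  pose proof (Rmax_l vm vp). pose proof (Rmax_r vm vp).
  set (v0 := Rmax vm vp) in *.
  set (q0 := (um - up - 2 * e2) / (2 * (2 * v0 + vm + vp))).
  assert (Hq0 : 0 < q0) by (apply Rdiv_lt_0_compat; lra).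
  exists (q0 * q0). split; [nra|]. intros e1 [He1 He1'].
  pose proof (sqrt_lt_R0 e1 He1) as Hq.
  assert (Hsmall : 2 * sqrt e1 * (2 * v0 + vm + vp) < um - up - 2 * e2).
  { assert (sqrt e1 < q0) by (rewrite <- (sqrt_square q0) by lra; apply sqrt_lt_1_alt; lra).
    replace (um - up - 2 * e2) with (2 * q0 * (2 * v0 + vm + vp)) by (unfold q0; field; lra).
    nra. }
  set (vh := v0 + vm + (um - up + e2 + 1) / (2 * sqrt e1)).
  assert (Hvh : 2 * sqrt e1 * (vh - vm) > um - up + e2).
  { replace (2 * sqrt e1 * (vh - vm)) with (2 * sqrt e1 * v0 + (um - up + e2 + 1))
      by (unfold vh; field; lra). nra. }
  assert (Hv0h : v0 < vh).
  { assert (0 < (um - up + e2 + 1) / (2 * sqrt e1)) by (apply Rdiv_lt_0_compat; lra).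
    unfold vh. lra. }
  pose proof (hugoniot_mismatch_pos e1 e2 um vm up vp He1 He2 Hvm Hvp Hsmall) as Hpos.
  fold v0 in Hpos.
  destruct (Ranalysis5.IVT_interv (fun v => - hugoniot_mismatch e1 e2 um vm up vp v) v0 vh)
    as [z [Hz Hroot]].
  - intros v Hv. apply continuity_pt_opp, continuity_pt_hugoniot_mismatch; lra.
  - exact Hv0h.
  - cbv beta. lra.
  - cbv beta.
    pose proof (hugoniot_mismatch_neg e1 e2 um vm up vp He1 He2 Hvm Hvp vh (Rlt_le _ _ Hv0h) Hvh).
    lra.
  - cbv beta in Hroot.
    assert (Hz0 : v0 < z) by (destruct (Req_dec z v0) as [->|]; lra).
    eexists. exists z. apply two_shock_of_mismatch_root; auto. lra.
Qed.

Definition delta_growth (e2 um vm up vp : R) : R :=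
  (vp * (um - up + 2 * e2) - vm * (up - um + 2 * e2)) / 2.

Lemma sigma_strength_defect (e2 um vm up vp us vs : R) : vs <> vm -> vs <> vp ->
  vs * (sigma2 e2 up vp us vs - sigma1 e2 um vm us vs) - delta_growth e2 um vm up vp
  = vp * (sigma2 e2 up vp us vs - (um + up) / 2) - vm * (sigma1 e2 um vm us vs - (um + up) / 2).
Proof.
  intros Hm Hp. unfold sigma1, sigma2, delta_growth. field.
  split; apply Rminus_eq_contra; congruence.
Qed.

Section Asymptotics.

Variables (e2 um vm up vp : R).
Hypotheses (He2 : 0 < e2) (Hvm : 0 < vm) (Hvp : 0 < vp) (Hgap : up < um - 2 * e2).

Lemma two_shock_speed_defects (e1 us vs : R) : two_shock e1 e2 um vm up vp us vs ->
  let S1 := sqrt (e2 ^ 2 + 4 * e1 * (vs + vm) ^ 2) in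
  let S2 := sqrt (e2 ^ 2 + 4 * e1 * (vs + vp) ^ 2) in
  us - ((um + up) / 2 + e2)
    = (S2 - S1) / 2 + vm * (S1 - e2) / (vs + vm) - vp * (S2 + e2) / (vs + vp) /\
  sigma1 e2 um vm us vs - (um + up) / 2 = (S2 - S1) / 2 - vp * (S2 + e2) / (vs + vp) /\
  sigma2 e2 up vp us vs - (um + up) / 2 = (S2 - S1) / 2 + vm * (S1 - e2) / (vs + vm).
Proof.
  intros [Hmax [_ [_ [Eus Eup]]]] S1 S2.
  pose proof (Rmax_l vm vp). pose proof (Rmax_r vm vp).
  unfold sigma1, sigma2. rewrite Eup, Eus. fold S1 S2.
  repeat split; field; lra.
Qed.

Lemma two_shock_sigma_le (e1 us vs : R) : 0 <= e1 ->
  two_shock e1 e2 um vm up vp us vs -> sigma1 e2 um vm us vs <= sigma2 e2 up vp us vs.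
Proof.
  intros He1 Hts. destruct (two_shock_speed_defects e1 us vs Hts) as (_ & E1 & E2).
  destruct Hts as [Hmax _]. pose proof (Rmax_l vm vp). pose proof (Rmax_r vm vp).
  destruct (sqrt_disc_bounds e1 e2 (vs + vm)) as (L1 & _ & _); try lra.
  destruct (sqrt_disc_bounds e1 e2 (vs + vp)) as (L2 & _ & _); try lra.
  assert (0 <= vp * (sqrt (e2 ^ 2 + 4 * e1 * (vs + vp) ^ 2) + e2) / (vs + vp))
    by (apply Rdiv_le_0_compat; nra).
  assert (0 <= vm * (sqrt (e2 ^ 2 + 4 * e1 * (vs + vm) ^ 2) - e2) / (vs + vm))
    by (apply Rdiv_le_0_compat; nra).
  lra.
Qed.

Lemma two_shock_vs_lower (e1 us vs : R) : 0 < e1 ->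
  two_shock e1 e2 um vm up vp us vs -> um - up - 2 * e2 <= 8 * sqrt e1 * vs.
Proof.
  intros He1 [Hmax [_ [_ [Eus Eup]]]].
  pose proof (Rmax_l vm vp). pose proof (Rmax_r vm vp). pose proof (sqrt_pos e1).
  destruct (sqrt_disc_bounds e1 e2 (vs + vm)) as (L1 & _ & U1); try lra.
  destruct (sqrt_disc_bounds e1 e2 (vs + vp)) as (L2 & _ & U2); try lra.
  set (S1 := sqrt (e2 ^ 2 + 4 * e1 * (vs + vm) ^ 2)) in *.
  set (S2 := sqrt (e2 ^ 2 + 4 * e1 * (vs + vp) ^ 2)) in *.
  assert (Ejump : um - up = (vs - vm) * (S1 - e2) / (vs + vm) + (vs - vp) * (S2 + e2) / (vs + vp))
    by (rewrite Eup, Eus; field; lra).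
  assert ((vs - vm) * (S1 - e2) / (vs + vm) <= S1 - e2) by (apply Rle_div_l; nra).
  assert ((vs - vp) * (S2 + e2) / (vs + vp) <= S2 + e2) by (apply Rle_div_l; nra).
  nra.
Qed.

Lemma two_shock_speed_rates : exists K, 0 <= K /\ forall e1 us vs, 0 < e1 ->
  two_shock e1 e2 um vm up vp us vs ->
  Rabs (us - ((um + up) / 2 + e2)) <= K * sqrt e1 /\
  Rabs (sigma1 e2 um vm us vs - (um + up) / 2) <= K * sqrt e1 /\
  Rabs (sigma2 e2 up vp us vs - (um + up) / 2) <= K * sqrt e1.
Proof.
  set (d0 := um - up - 2 * e2). assert (Hd0 : 0 < d0) by (unfold d0; lra).
  set (k := 8 * e2 / d0). assert (Hk : 0 <= k) by (apply Rdiv_le_0_compat; lra).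
  exists (Rabs (vp - vm) + 2 * vm + 2 * vp * (k + 1)).
  split; [pose proof (Rabs_pos (vp - vm)); nra|].
  intros e1 us vs He1 Hts.
  pose proof (two_shock_vs_lower e1 us vs He1 Hts) as Hvs. fold d0 in Hvs.
  destruct (two_shock_speed_defects e1 us vs Hts) as (Eu & E1 & E2). rewrite Eu, E1, E2.
  destruct Hts as [Hmax _].
  pose proof (Rmax_l vm vp). pose proof (Rmax_r vm vp). pose proof (sqrt_lt_R0 e1 He1).
  destruct (sqrt_disc_bounds e1 e2 (vs + vm)) as (L1 & _ & U1); try lra.
  destruct (sqrt_disc_bounds e1 e2 (vs + vp)) as (L2 & _ & U2); try lra.
  pose proof (sqrt_disc_lipschitz e1 e2 (vs + vm) (vs + vp) He1 ltac:(lra) ltac:(lra)) as HD.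
  replace (vs + vp - (vs + vm)) with (vp - vm) in HD by ring. apply Rabs_le_between in HD.
  set (S1 := sqrt (e2 ^ 2 + 4 * e1 * (vs + vm) ^ 2)) in *.
  set (S2 := sqrt (e2 ^ 2 + 4 * e1 * (vs + vp) ^ 2)) in *.
  set (q := sqrt e1) in *.
  assert (Hal : 0 <= vm * (S1 - e2) / (vs + vm) <= 2 * vm * q).
  { split; [apply Rdiv_le_0_compat; [apply Rmult_le_pos|]; lra | apply Rle_div_l; nra]. }
  assert (Hbe : 0 <= vp * (S2 + e2) / (vs + vp) <= 2 * vp * (k + 1) * q).
  { assert (Hkq : e2 <= k * q * vs).
    { replace (k * q * vs) with (e2 * (8 * q * vs / d0)) by (unfold k; field; lra).
      assert (1 <= 8 * q * vs / d0) by (apply Rle_div_r; lra). nra. }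
    assert (0 <= k * q * vp * vp)
      by (apply Rmult_le_pos; [apply Rmult_le_pos; [apply Rmult_le_pos|]|]; lra).
    split; [apply Rdiv_le_0_compat; [apply Rmult_le_pos|]; lra | apply Rle_div_l; [lra|]].
    assert (vp * (S2 + e2) <= vp * (2 * e2 + 2 * q * (vs + vp))) by (apply Rmult_le_compat_l; lra).
    assert (vp * e2 <= vp * (k * q * vs)) by (apply Rmult_le_compat_l; lra).
    nra. }
  repeat split; apply Rabs_le_between; nra.
Qed.

Lemma two_shock_rates : exists K, forall e1 us vs, 0 < e1 <= 1 ->
  two_shock e1 e2 um vm up vp us vs ->
  Rabs (us - ((um + up) / 2 + e2)) <= K * sqrt e1 /\
  Rabs (sigma1 e2 um vm us vs - (um + up) / 2) <= K * sqrt e1 /\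
  Rabs (sigma2 e2 up vp us vs - (um + up) / 2) <= K * sqrt e1 /\
  Rabs (vs * (sigma2 e2 up vp us vs - sigma1 e2 um vm us vs) - delta_growth e2 um vm up vp)
    <= K * sqrt e1 /\
  Rabs (us * (sigma2 e2 up vp us vs - sigma1 e2 um vm us vs) - 0) <= K * sqrt e1.
Proof.
  destruct two_shock_speed_rates as [K [HK Hrates]].
  set (C := Rabs ((um + up) / 2 + e2) + K). pose proof (Rabs_pos ((um + up) / 2 + e2)).
  exists (K + (vp + vm) * K + 2 * K * C).
  intros e1 us vs He1 Hts.
  destruct (Hrates e1 us vs ltac:(lra) Hts) as (Bu & B1 & B2).
  destruct Hts as [Hmax _]. pose proof (Rmax_l vm vp). pose proof (Rmax_r vm vp).
  pose proof (sqrt_pos e1) as Hq0.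
  assert (Hq1 : sqrt e1 <= 1) by (rewrite <- sqrt_1; apply sqrt_le_1_alt; lra).
  set (s1 := sigma1 e2 um vm us vs) in *. set (s2 := sigma2 e2 up vp us vs) in *.
  set (sg := (um + up) / 2) in *. set (q := sqrt e1) in *.
  assert (Hgap12 : Rabs (s2 - s1) <= 2 * K * q).
  { replace (s2 - s1) with ((s2 - sg) - (s1 - sg)) by ring.
    eapply Rle_trans; [apply Rabs_triang|]. rewrite Rabs_Ropp. lra. }
  assert (Hstrength : Rabs (vs * (s2 - s1) - delta_growth e2 um vm up vp) <= (vp + vm) * K * q).
  { unfold s1, s2, sg. rewrite sigma_strength_defect by lra. fold s1 s2 sg.
    eapply Rle_trans; [apply Rabs_triang|].
    rewrite Rabs_Ropp, !Rabs_mult, (Rabs_right vp), (Rabs_right vm) by lra. nra. }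
  assert (Hmass : Rabs (us * (s2 - s1) - 0) <= 2 * K * C * q).
  { assert (Hus : Rabs us <= C).
    { replace us with ((us - (sg + e2)) + (sg + e2)) by ring.
      eapply Rle_trans; [apply Rabs_triang|]. unfold C. nra. }
    rewrite Rminus_0_r, Rabs_mult. pose proof (Rabs_pos us). pose proof (Rabs_pos (s2 - s1)).
    apply Rle_trans with (C * (2 * K * q)); [apply Rmult_le_compat; lra | lra]. }
  assert (0 <= K * q) by nra.
  assert (0 <= (vp + vm) * K * q) by (apply Rmult_le_pos; nra).
  assert (0 <= 2 * K * C * q) by (unfold C; apply Rmult_le_pos; nra).
  repeat split; eapply Rle_trans; try eassumption; lra.
Qed.

End Asymptotics.

Lemma two_shock_limits (e2 um vm up vp e0 : R) (us vs : R -> R) :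
  0 < e2 -> 0 < vm -> 0 < vp -> up < um - 2 * e2 ->
  (forall e1, 0 < e1 < e0 -> two_shock e1 e2 um vm up vp (us e1) (vs e1)) ->
  let s1 := fun e => sigma1 e2 um vm (us e) (vs e) in
  let s2 := fun e => sigma2 e2 up vp (us e) (vs e) in
  vanishes e0 (fun e => us e - ((um + up) / 2 + e2)) /\
  vanishes e0 (fun e => s1 e - (um + up) / 2) /\
  vanishes e0 (fun e => s2 e - (um + up) / 2) /\
  vanishes e0 (fun e => vs e * (s2 e - s1 e) - delta_growth e2 um vm up vp) /\
  vanishes e0 (fun e => us e * (s2 e - s1 e) - 0).
Proof.
  intros He2 Hvm Hvp Hgap Hts s1 s2.
  destruct (two_shock_rates e2 um vm up vp He2 Hvm Hvp Hgap) as [K HK].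
  assert (Hdom : forall e, 0 < e < Rmin 1 e0 -> 0 < e <= 1 /\ 0 < e < e0)
    by (intros; split; Rminmax_lra).
  repeat split; apply (vanishes_of_sqrt_bound e0 K); intros e He;
    destruct (Hdom e He) as [He1 He0]; apply (HK e (us e) (vs e) He1 (Hts e He0)).
Qed.

Theorem theorem6p1 (e2 um vm up vp : R) :
  0 < e2 -> 0 < vm -> 0 < vp -> up < um - 2 * e2 ->
  (* the two-shock solution exists for small e1 > 0 *)
  (exists e0, 0 < e0 /\ forall e1, 0 < e1 < e0 ->
      exists us vs, two_shock e1 e2 um vm up vp us vs) /\
  (* any choice of it converges to the delta-shock solution *)
  (forall (e0 : R) (us vs : R -> R), 0 < e0 ->
     (forall e1, 0 < e1 < e0 -> two_shock e1 e2 um vm up vp (us e1) (vs e1)) ->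
     let sigma := (um + up) / 2 in
     let w := fun t => (vp * (um - up + 2 * e2) - vm * (up - um + 2 * e2)) / 2 * t in
     dist_conv e0
       (fun e1 t x => three_state (sigma1 e2 um vm (us e1) (vs e1))
                                  (sigma2 e2 up vp (us e1) (vs e1)) um (us e1) up t x)
       (fun t x => um + (up - um) * H (x - sigma * t)) (fun _ => 0) sigma /\
     dist_conv e0
       (fun e1 t x => three_state (sigma1 e2 um vm (us e1) (vs e1))
                                  (sigma2 e2 up vp (us e1) (vs e1)) vm (vs e1) vp t x)
       (fun t x => vm + (vp - vm) * H (x - sigma * t)) w sigma /\
     (* u_delta = sigma + e2 is the limit of the intermediate velocity *)
     (forall eps, 0 < eps -> exists del, 0 < del /\
        forall e1, 0 < e1 < Rmin del e0 -> Rabs (us e1 - (sigma + e2)) < eps)).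
Proof.
  intros He2 Hvm Hvp Hgap. split; [now apply two_shock_exists|].
  intros e0 us vs _ Hts sigma w.
  destruct (two_shock_limits e2 um vm up vp e0 us vs He2 Hvm Hvp Hgap Hts)
    as (Hus & Hs1 & Hs2 & Hv & Hu).
  set (s1 := fun e => sigma1 e2 um vm (us e) (vs e)).
  set (s2 := fun e => sigma2 e2 up vp (us e) (vs e)).
  assert (Hle : forall e, 0 < e < e0 -> s1 e <= s2 e)
    by (intros e He;
        apply (two_shock_sigma_le e2 um vm up vp He2 Hvm Hvp e); [lra | apply Hts, He]).
  split; [|split].
  - apply (three_state_dist_conv e0 s1 s2 us (fun _ => 0) um up sigma 0); auto.
    intros t. ring.
  - apply (three_state_dist_conv e0 s1 s2 vs w vm vp sigma (delta_growth e2 um vm up vp)); auto.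
  - exact Hus.
Qed.
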